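(* Let $g(x,y)=\sum_{i,j=-\infty}^{\infty}c(i,j)x^iy^j$ be a nonzero bilateral formal series with $g\perp g$, and let $f(x,y)$ be a bilateral formal series. Then $f\perp g$ if and only if there exist integers $m_0,k_0$ with $c(m_0,k_0)\neq 0$ and bilateral formal series $P(x)=\sum_{i=-\infty}^{\infty}p_ix^i$, $Q(x)=\sum_{i=-\infty}^{\infty}q_ix^i$ (with arbitrary complex coefficient sequences $p_i,q_i$) such that $$f(x,y)=\frac{1}{c(m_0,k_0)}\Big(P(x)\,[x^{m_0}]g(x,y)-Q(x)\,[x^{k_0}]g(x,y)\Big),$$ where $[x^{m}]g(x,y)=\sum_{j=-\infty}^{\infty}c(m,j)y^j$ denotes the coefficient of $x^{m}$ in $g(x,y)$.
   Context: A bilateral formal series in $x,y$ is a formal expression $\sum_{i,j\in\mathbb{Z}}\lambda(i,j)x^iy^j$ with complex coefficients. For two such series $f,g$, the expression $g(u,v)f(z,w)-g(u,w)f(z,v)+g(v,w)f(z,u)$ is a well-defined formal series in four independent variables $u,v,w,z$. One writes $f\perp g$ if this expression is identically zero. *)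

From HB Require Import structures.
From mathcomp Require Import all_boot all_order all_algebra.
From mathcomp Require Import complex.
From mathcomp Require Import Rstruct.
From Stdlib Require Import Reals.
Set Implicit Arguments. Unset Strict Implicit. Unset Printing Implicit Defensive.
Import Order.TTheory GRing.Theory Num.Theory.
Local Open Scope ring_scope.

Notation Cplx := (complex Rdefinitions.R).

(* A bilateral formal series sum_{i,j in Z} lambda(i,j) x^i y^j is given by
   its coefficient function lambda. *)
Notation bseries2 := (int -> int -> Cplx).
Notation bseries1 := (int -> Cplx).

(* f ⊥ g : the formal series g(u,v)f(z,w) - g(u,w)f(z,v) + g(v,w)f(z,u) in
   u,v,w,z vanishes identically, i.e. its coefficient of u^a v^b w^c z^d is 0
   for all a b c d.  (Each product is of series in disjoint variables, so the
   coefficient of u^a v^b w^c z^d in g(u,v)f(z,w) is g(a,b) f(d,c), etc.) *)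
Definition orth (f g : bseries2) : Prop :=
  forall a b c d : int,
    g a b * f d c - g a c * f d b + g b c * f d a = 0.

From HB Require Import structures.
From mathcomp Require Import all_boot all_order all_algebra.
From mathcomp Require Import complex Rstruct.
From mathcomp Require Import ring.
Import Order.TTheory GRing.Theory Num.Theory.
Local Open Scope ring_scope.

(* The relation f ⊥ g is linear in f.  Reading the defining identity at the
   coefficient of u^m0 v^k0 w^j z^i, with c(m0,k0) != 0, solves for f(i,j) in
   terms of the rows [x^m0]g and [x^k0]g, with P(i) = f(i,k0) and
   Q(i) = f(i,m0).  Conversely g ⊥ g says that, for every m, the series
   (x,y) |-> P(x) [x^m]g(x,y) is orthogonal to g, and linearity does the rest. *)

Section Orthogonality.

Variable g : bseries2.

Lemma eq_orth (f1 f2 : bseries2) : f1 =2 f2 -> orth f2 g -> orth f1 g.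
Proof. by move=> f12 f2g a b c d; rewrite !f12; apply: f2g. Qed.

Lemma orthB (f1 f2 : bseries2) :
  orth f1 g -> orth f2 g -> orth (fun i j => f1 i j - f2 i j) g.
Proof.
move=> f1g f2g a b c d.
transitivity ((g a b * f1 d c - g a c * f1 d b + g b c * f1 d a)
            - (g a b * f2 d c - g a c * f2 d b + g b c * f2 d a)); first by ring.
by rewrite f1g f2g subrr.
Qed.

Lemma orthZ (k : Cplx) (f : bseries2) :
  orth f g -> orth (fun i j => k * f i j) g.
Proof.
move=> fg a b c d.
transitivity (k * (g a b * f d c - g a c * f d b + g b c * f d a)); first by ring.
by rewrite fg mulr0.
Qed.

Lemma orth_mul_row (h : bseries2) (P : bseries1) (m : int) :
  orth h g -> orth (fun i j => P i * h m j) g.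
Proof.
move=> hg a b c d.
transitivity (P d * (g a b * h m c - g a c * h m b + g b c * h m a)); first by ring.
by rewrite hg mulr0.
Qed.

Lemma orth_row_expansion (f : bseries2) (m k : int) :
  orth f g -> g m k != 0 ->
  forall i j, f i j = (g m k)^-1 * (f i k * g m j - f i m * g k j).
Proof.
move=> fg gmk i j; apply: (mulfI gmk); rewrite mulrA mulfV // mul1r.
by apply/subr0_eq; rewrite -(fg m k j i); ring.
Qed.

End Orthogonality.

Theorem theorem2p2 (g f : bseries2) :
  (exists i j : int, g i j != 0) ->
  orth g g ->
  (orth f g <->
   exists m0 k0 : int, g m0 k0 != 0 /\
     exists P Q : bseries1,
       forall i j : int,
         f i j = (g m0 k0)^-1 * (P i * g m0 j - Q i * g k0 j)).
Proof.
move=> [m [k gmk]] gg; split=> [fg | [m0 [k0 [_ [P [Q fE]]]]]].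
  exists m, k; split=> //; exists (fun i => f i k), (fun i => f i m).
  exact: orth_row_expansion.
apply: (@eq_orth g f (fun i j => (g m0 k0)^-1 * (P i * g m0 j - Q i * g k0 j)) fE).
by apply: orthZ; apply: orthB; apply: orth_mul_row _ _ _ _ gg.
Qed.
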